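(* Let $R,S$ be (possibly empty) chains and let $T$ be the chain $T=[R^*\,1\,1\,2\,2\,S]$ (concatenation). If $\mathcal{Z}(T)>\tfrac13$, then $\rho_S>\rho_R$ (i.e. $[S]<[R]$ in the paper's ordering).
   Context: A chain is a finite sequence $T=[a_1a_2\dots a_n]$ of positive integers. For a chain $S=[s_1\dots s_m]$ write $\rho_S=[0;s_1,\dots,s_m]$, with $\rho_\emptyset=0$ for the empty chain, and $[s_1;s_2,\dots,s_m]$ for the finite continued fraction, which equals $1/\rho_S$. The reverse of $R=[r_1\dots r_k]$ is $R^*=[r_k\dots r_1]$. Define $\mathcal{Z}(T)=\big(\max_{1\le i\le n}([a_i;a_{i+1},\dots,a_n]+[0;a_{i-1},\dots,a_1])\big)^{-1}$, where for $i=1$ the second summand is $0$. The paper orders chains by $[T_1]<[T_2]\iff\rho_{T_1}>\rho_{T_2}$. *)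

From mathcomp Require Import all_boot all_order all_algebra.
Set Implicit Arguments. Unset Strict Implicit. Unset Printing Implicit Defensive.
Import Order.TTheory GRing.Theory Num.Theory.
Local Open Scope ring_scope.

(* A chain is a seq nat; positivity of its entries is stated separately. *)
Definition chain_pos (s : seq nat) : bool := all (fun a => 0 < a)%N s.

(* rho_S = [0; s_1, ..., s_m], with rho_[::] = 0. *)
Definition rho (s : seq nat) : rat :=
  foldr (fun (a : nat) (x : rat) => (a%:R + x)^-1) 0 s.

Definition cfi (a : nat) (s : seq nat) : rat := a%:R + rho s.

(* Term at (0-based) position i of T:
   [a_i; a_{i+1},...,a_n] + [0; a_{i-1},...,a_1]. *)
Definition Zterm (T : seq nat) (i : nat) : rat :=
  cfi (nth 0%N T i) (drop i.+1 T) + rho (rev (take i T)).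

(* Z(T) = (max_i Zterm T i)^-1 (all terms are positive for a nonempty
   chain, so taking the max with initial value 0 is harmless). *)
Definition Zc (T : seq nat) : rat :=
  (\big[Num.max/0]_(i < size T) Zterm T i)^-1.

From mathcomp Require Import all_boot all_order all_algebra.
From mathcomp Require Import ring lra.
Import Order.TTheory GRing.Theory Num.Theory.
Local Open Scope ring_scope.

(* Only the term of Z(T) at the first entry 2 is needed.  With x = rho S and
   y = rho R it equals 2 + 1/(2 + x) + [0; 1, 1, R] = 3 + 1/(2 + x) - 1/(2 + y),
   so Z(T) > 1/3 forces 1/(2 + x) < 1/(2 + y), i.e. x > y.  Positivity of the
   entries is never used: only rho >= 0 matters. *)

Lemma rho_ge0 (s : seq nat) : 0 <= rho s.
Proof. by elim: s => [|a s IH] //=; rewrite invr_ge0 addr_ge0. Qed.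

Lemma Zterm_lt_of_Zc_gt (c : rat) (T : seq nat) (i : nat) :
  0 < c -> c^-1 < Zc T -> (i < size T)%N -> Zterm T i < c.
Proof.
rewrite /Zc => c_gt0; set M := \big[_/_]_(_ < _) _ => lt_cM i_lt.
have M_gt0 : 0 < M by rewrite -invr_gt0 (lt_trans _ lt_cM) ?invr_gt0.
apply: le_lt_trans (le_bigmax 0 (fun j : 'I_(size T) => Zterm T j) (Ordinal i_lt)) _.
by rewrite -ltf_pV2 ?posrE.
Qed.

Lemma Zterm_rev_cat (P Q : seq nat) (a : nat) :
  Zterm (rev P ++ a :: Q) (size P) = cfi a Q + rho P.
Proof.
rewrite /Zterm -(size_rev P) nth_cat ltnn subnn take_size_cat // revK.
by rewrite -cat_rcons drop_size_cat ?size_rcons.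
Qed.

Lemma rho_1_1 (s : seq nat) : rho [:: 1%N, 1%N & s] = 1 - (2%:R + rho s)^-1.
Proof.
rewrite /rho /= -/(rho s); have y_ge0 := rho_ge0 s.
have y1_neq0 : 1 + rho s != 0 by rewrite gt_eqF // ltr_pwDl.
have y2_neq0 : 2%:R + rho s != 0 by rewrite gt_eqF // ltr_pwDl.
have -> : 1 + (1 + rho s)^-1 = (2%:R + rho s) / (1 + rho s) by field.
by field; rewrite y1_neq0 y2_neq0.
Qed.

Theorem lemma3p4 (R S : seq nat) :
  chain_pos R -> chain_pos S ->
  Zc (rev R ++ [:: 1%N; 1%N; 2%N; 2%N] ++ S) > 1 / 3%:R ->
  rho S > rho R.
Proof.
move=> _ _; rewrite mul1r.
have -> : rev R ++ [:: 1%N; 1%N; 2%N; 2%N] ++ S =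
          rev [:: 1%N, 1%N & R] ++ 2%N :: 2%N :: S.
  by rewrite !rev_cons -!cats1 -!catA.
set P := [:: 1%N, 1%N & R].
have P_lt : (size P < size (rev P ++ 2%N :: 2%N :: S))%N.
  by rewrite size_cat size_rev addnS ltnS leq_addr.
move/(Zterm_lt_of_Zc_gt _ _ _ (ltr0Sn _ 2))/(_ P_lt).
rewrite Zterm_rev_cat rho_1_1 /cfi /= -/(rho S) => sum_lt3.
have x2_gt0 : 0 < 2%:R + rho S by have := rho_ge0 S; lra.
have y2_gt0 : 0 < 2%:R + rho R by have := rho_ge0 R; lra.
have : (2%:R + rho S)^-1 < (2%:R + rho R)^-1 by lra.
by rewrite ltf_pV2 ?posrE // ltrD2l.
Qed.
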